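(* Let $\mathcal{B}$ be a set of data expressions closed under taking sub-expressions, and let $N$ be such that $1\le\mathrm{Card}(\mathcal{B})<N$. Then for every type $\sigma$ with $\mathrm{depth}(\sigma)\le K$ in which exactly $L$ sorts occur (counted with repetitions): $\mathrm{Card}([\![\sigma]\!])<\exp_2^K(N^L)$. Moreover, for $e,u\in[\![\sigma]\!]$, testing whether $e\sqsupseteq u$ takes at most $\exp_2^K(N^{(L+1)^3})$ comparisons between elements of $\mathcal{B}$.
   Context: Types are built from a finite set of sorts by $\sigma ::= \iota \mid \sigma\times\tau \mid \sigma\Rightarrow\tau$. Arrow depth: $\mathrm{depth}(\iota)=0$, $\mathrm{depth}(\sigma\times\tau)=\max(\mathrm{depth}(\sigma),\mathrm{depth}(\tau))$, $\mathrm{depth}(\sigma\Rightarrow\tau)=1+\max(\mathrm{depth}(\sigma),\mathrm{depth}(\tau))$. Data expressions are built from data constructors (each with a type $\kappa_1\Rightarrow\cdots\Rightarrow\kappa_m\Rightarrow\iota$, $\iota$ a sort, arguments of type order $0$, i.e. built only from sorts and products) as $d ::= c\,d_1\cdots d_m \mid (d,d')$, fully applied and well-typed. $\exp_2^0(n)=n$, $\exp_2^{K+1}(n)=2^{\exp_2^K(n)}$. Non-deterministic extensional values: $[\![\iota]\!]=\{d\in\mathcal{B}\mid d:\iota\}$ for sorts $\iota$; $[\![\sigma\times\tau]\!]=[\![\sigma]\!]\times[\![\tau]\!]$; $[\![\sigma\Rightarrow\tau]\!]=\{A_{\sigma\Rightarrow\tau}\mid A\subseteq[\![\sigma]\!]\times[\![\tau]\!]\}$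 (arbitrary relations, tagged with their type). The relation $\sqsupseteq$ on extensional values of the same type: $d\sqsupseteq b$ iff $d=b$ for elements of a sort; $(e_1,e_2)\sqsupseteq(u_1,u_2)$ iff $e_1\sqsupseteq u_1$ and $e_2\sqsupseteq u_2$; $A_\sigma\sqsupseteq B_\sigma$ for functional $\sigma$ iff for every $(e,u)\in B$ there is $u'\sqsupseteq u$ with $(e,u')\in A$. *)

From Stdlib Require List.
From mathcomp Require Import all_boot.
Set Implicit Arguments.
Unset Strict Implicit.
Unset Printing Implicit Defensive.

Inductive ty (S : Type) : Type :=
| TSort of S
| TProd of ty S & ty S
| TArr of ty S & ty S.
Arguments TSort {S}.
Arguments TProd {S}.
Arguments TArr {S}.

Fixpoint depth {S} (t : ty S) : nat :=
  match t with
  | TSort _ => 0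
  | TProd a b => maxn (depth a) (depth b)
  | TArr a b => (maxn (depth a) (depth b)).+1
  end.

Fixpoint nsorts {S} (t : ty S) : nat :=
  match t with
  | TSort _ => 1
  | TProd a b => nsorts a + nsorts b
  | TArr a b => nsorts a + nsorts b
  end.

Fixpoint exp2 (K n : nat) : nat :=
  match K with
  | 0 => n
  | K'.+1 => 2 ^ exp2 K' n
  end.

Inductive dexp (C : Type) : Type :=
| DCon of C & seq (dexp C)
| DPair of dexp C & dexp C.
Arguments DCon {C}.
Arguments DPair {C}.

Inductive isub {C} : dexp C -> dexp C -> Prop :=
| isub_con c ds d : List.In d ds -> isub d (DCon c ds)
| isub_pairl d1 d2 : isub d1 (DPair d1 d2)
| isub_pairr d1 d2 : isub d2 (DPair d1 d2).

Section Typing.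
Variables (S : eqType) (C : Type).
(* a constructor c has type  cargs c_1 => ... => cargs c_m => cres c *)
Variables (cargs : C -> seq (ty S)) (cres : C -> S).

Fixpoint wt (d : dexp C) (t : ty S) {struct d} : bool :=
  match d, t with
  | DCon c ds, TSort s =>
      (cres c == s) &&
      (fix go (ds : seq (dexp C)) (ts : seq (ty S)) {struct ds} : bool :=
         match ds, ts with
         | [::], [::] => true
         | d :: ds', k :: ts' => wt d k && go ds' ts'
         | _, _ => false
         end) ds (cargs c)
  | DPair d1 d2, TProd a b => wt d1 a && wt d2 b
  | _, _ => false
  end.
End Typing.

Section Semantics.
Variables (S : finType) (C : Type).
Variables (cargs : C -> seq (ty S)) (cres : C -> S).
(* The finite set B of data expressions is given as a finite type Bt
   together with an (injective) embedding bval into data expressions. *)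
Variables (Bt : finType) (bval : Bt -> dexp C).

(* [[sigma]] : [[iota]] = {d in B | d : iota}, products, and relations
   (subsets of [[sigma]] x [[tau]]); the type tag is the Rocq type. *)
Fixpoint sem (t : ty S) : finType :=
  match t with
  | TSort s => {b : Bt | wt cargs cres (bval b) (TSort s)}
  | TProd a b => (sem a * sem b)%type
  | TArr a b => {set (sem a * sem b)}
  end.

Fixpoint sqge (t : ty S) : sem t -> sem t -> Prop :=
  match t return sem t -> sem t -> Prop with
  | TSort s => fun d b => d = b
  | TProd a b => fun e u => @sqge a e.1 u.1 /\ @sqge b e.2 u.2
  | TArr a b => fun A B =>
      forall p, p \in B -> exists2 u', @sqge b u' p.2 & (p.1, u') \in A
  end.

(* Instrumented decision procedures: result together with the number of
   comparisons between elements of B performed (exhaustive evaluation). *)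
Definition andc (x y : bool * nat) : bool * nat := (x.1 && y.1, x.2 + y.2).
Definition orc (x y : bool * nat) : bool * nat := (x.1 || y.1, x.2 + y.2).

Fixpoint eqc (t : ty S) : sem t -> sem t -> bool * nat :=
  match t return sem t -> sem t -> bool * nat with
  | TSort s => fun x y => (val x == val y, 1)
  | TProd a b => fun x y => andc (@eqc a x.1 y.1) (@eqc b x.2 y.2)
  | TArr a b => fun A B =>
      let pairc (x y : sem a * sem b) := andc (@eqc a x.1 y.1) (@eqc b x.2 y.2) in
      let memc x (Y : {set (sem a * sem b)}) :=
        foldr (fun y acc => orc (pairc x y) acc) (false, 0) (enum Y) in
      let subc (X Y : {set (sem a * sem b)}) :=
        foldr (fun x acc => andc (memc x Y) acc) (true, 0) (enum X) in
      andc (subc A B) (subc B A)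
  end.

Fixpoint geqc (t : ty S) : sem t -> sem t -> bool * nat :=
  match t return sem t -> sem t -> bool * nat with
  | TSort s => fun x y => (val x == val y, 1)
  | TProd a b => fun x y => andc (@geqc a x.1 y.1) (@geqc b x.2 y.2)
  | TArr a b => fun A B =>
      foldr (fun p acc =>
        andc (foldr (fun q acc' =>
                 orc (andc (@eqc a q.1 p.1) (@geqc b q.2 p.2)) acc')
               (false, 0) (enum A)) acc)
        (true, 0) (enum B)
  end.
End Semantics.

(* By induction on the type.  [[s * t]] has |[[s]]| |[[t]]| elements and
   [[s => t]] has 2^(|[[s]]| |[[t]]|), so exp2 K (N ^ L), being
   supermultiplicative in N ^ L, bounds the cardinality, each arrow adding
   one exponential.  The tests recurse structurally; at an arrow they range
   over pairs drawn from two relations, each of size below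
   X = exp2 K (N ^ L), and per pair test both components, which have fewer
   sort occurrences and so by induction cost at most Q = exp2 K (N ^ L^3)
   each.  The total 4 X^2 Q is at most exp2 K (N ^ (L+1)^3), since
   4 <= N^2 and 2 + 2L + L^3 <= (L+1)^3: one exponential fewer than allowed.
   Only the finiteness of B and |B| < N matter. *)

From mathcomp Require Import all_boot zify.

Set Implicit Arguments.
Unset Strict Implicit.
Unset Printing Implicit Defensive.

Lemma foldr_andcE T (f : T -> bool * nat) (s : seq T) :
  foldr (fun x acc => andc (f x) acc) (true, 0) s =
  (all (fun x => (f x).1) s, \sum_(x <- s) (f x).2).
Proof. by elim: s => [|x s IHs] /=; rewrite ?big_nil ?big_cons ?IHs. Qed.

Lemma foldr_orcE T (f : T -> bool * nat) (s : seq T) :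
  foldr (fun x acc => orc (f x) acc) (false, 0) s =
  (has (fun x => (f x).1) s, \sum_(x <- s) (f x).2).
Proof. by elim: s => [|x s IHs] /=; rewrite ?big_nil ?big_cons ?IHs. Qed.

Lemma nested_foldr_subset (T : finType) (f : T -> T -> bool * nat) (A B : {set T}) :
  (forall x y, (f x y).1 = (x == y)) ->
  (foldr (fun x acc => andc (foldr (fun y acc' => orc (f x y) acc') (false, 0) (enum B)) acc)
     (true, 0) (enum A)).1 = (A \subset B).
Proof.
move=> fE; rewrite foldr_andcE /=; apply/allP/subsetP => sub x.
  move=> xA; have := sub x; rewrite mem_enum foldr_orcE => /(_ xA) /hasP [y].
  by rewrite mem_enum fE => yB /eqP ->.
rewrite mem_enum => /sub xB; rewrite foldr_orcE; apply/hasP.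
by exists x; rewrite ?mem_enum ?fE.
Qed.

Lemma sum_seq_le_size_mul T (s : seq T) (g : T -> nat) M :
  (forall x, g x <= M) -> \sum_(x <- s) g x <= size s * M.
Proof.
by move=> gM; rewrite -sum1_size big_distrl /= leq_sum // => x _; rewrite mul1n.
Qed.

Lemma nested_foldr_cost_le T U (s : seq T) (r : seq U) (f : T -> U -> bool * nat) M :
  (forall x y, (f x y).2 <= M) ->
  (foldr (fun x acc => andc (foldr (fun y acc' => orc (f x y) acc') (false, 0) r) acc)
     (true, 0) s).2 <= size s * size r * M.
Proof.
move=> fM; rewrite foldr_andcE -mulnA; apply: sum_seq_le_size_mul => x.
by rewrite foldr_orcE; apply: sum_seq_le_size_mul.
Qed.

Lemma card_set (T : finType) : #|{set T}| = 2 ^ #|T|.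
Proof. by rewrite -[LHS]cardsT -powersetT card_powerset cardsT. Qed.

Lemma nsorts_gt0 S (t : ty S) : 0 < nsorts t.
Proof. by elim: t => //= a ha b hb; rewrite addn_gt0 ha. Qed.

Lemma exp2_ge K n : n <= exp2 K n.
Proof. by elim: K => //= K IHK; apply: leq_trans IHK (ltnW (ltn_expl _ _)). Qed.

Lemma leq_exp2 K m n : m <= n -> exp2 K m <= exp2 K n.
Proof. by elim: K => //= K IHK mn; rewrite leq_pexp2l // IHK. Qed.

Lemma leq_mul_exp2 K a b x y :
  a <= exp2 K x -> b <= exp2 K y -> 1 < x -> 1 < y -> a * b <= exp2 K (x * y).
Proof.
move=> ax bY x_gt1 y_gt1; apply: leq_trans (leq_mul ax bY) _ => {ax bY}.
elim: K => //= K IHK; rewrite -expnD leq_pexp2l //; apply: leq_trans IHK.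
have := leq_trans x_gt1 (exp2_ge K x); have := leq_trans y_gt1 (exp2_ge K y).
move: (exp2 K x) (exp2 K y) => X Y; nia.
Qed.

Section Bounds.
Variable N : nat.
Hypothesis N_gt1 : 1 < N.

Lemma expN_gt1 m : 0 < m -> 1 < N ^ m.
Proof. by move=> m_gt0; rewrite -[X in X < _](expn0 N) ltn_exp2l. Qed.

Lemma ltn_mul_exp2 K m n x y : 0 < m -> 0 < n ->
  x < exp2 K (N ^ m) -> y < exp2 K (N ^ n) -> x * y < exp2 K (N ^ (m + n)).
Proof.
move=> m_gt0 n_gt0 xlt ylt; rewrite expnD.
apply: leq_trans (ltn_mul (ltnSn x) (ltnSn y)) _.
exact: leq_mul_exp2 xlt ylt (expN_gt1 m_gt0) (expN_gt1 n_gt0).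
Qed.

Definition cost_bound K L := exp2 K (N ^ (L + 1) ^ 3).

Lemma cost_step K L : 0 < L ->
  4 * exp2 K (N ^ L) * exp2 K (N ^ L) * exp2 K (N ^ L ^ 3) <= cost_bound K L.
Proof.
move=> L_gt0; have NL := expN_gt1 L_gt0.
have NL3 : 1 < N ^ L ^ 3 by apply: expN_gt1; rewrite expn_gt0 L_gt0.
have N4 : 4 <= N ^ 2 by rewrite (@leq_exp2r 2 N 2).
apply: (@leq_trans (exp2 K (4 * N ^ L * N ^ L * N ^ L ^ 3))); last first.
  apply: leq_exp2; apply: (@leq_trans (N ^ (2 + L + L + L ^ 3))).
    by rewrite !expnD !leq_mul.
  by rewrite leq_exp2l // !expnS expn0; nia.
apply: leq_mul_exp2 _ (leqnn _) _ (NL3); last nia.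
apply: leq_mul_exp2 _ (leqnn _) _ (NL); last nia.
exact: leq_mul_exp2 (exp2_ge K 4) (leqnn _) _ NL.
Qed.

Lemma cost_bound_gt0 K L : 0 < cost_bound K L.
Proof. by apply: leq_trans (exp2_ge _ _); rewrite expn_gt0 ltnW. Qed.

Lemma cost_bound_le_cube K La Lb :
  0 < Lb -> cost_bound K La <= exp2 K (N ^ (La + Lb) ^ 3).
Proof. by move=> Lb_gt0; rewrite leq_exp2 // leq_exp2l // leq_exp2r // leq_add2l. Qed.

Lemma cost_bound_add K La Lb : 0 < La -> 0 < Lb ->
  cost_bound K La + cost_bound K Lb <= cost_bound K (La + Lb).
Proof.
move=> La_gt0 Lb_gt0; have L_gt0 : 0 < La + Lb by rewrite addn_gt0 La_gt0.
apply: leq_trans (cost_step K L_gt0).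
have X_gt0 : 0 < exp2 K (N ^ (La + Lb)).
  by apply: leq_trans (exp2_ge _ _); rewrite expn_gt0 ltnW.
have := cost_bound_le_cube K La Lb_gt0; have := cost_bound_le_cube K Lb La_gt0.
rewrite addnC -(mulnA 4); move: (exp2 K _) X_gt0 => X X_gt0; move: (exp2 K _) => Q.
have : 0 < X * X by rewrite muln_gt0 X_gt0.
move: (X * X) => Y; nia.
Qed.

Lemma cost_bound_arr K La Lb : 0 < La -> 0 < Lb ->
  2 * (exp2 K (N ^ (La + Lb)) * exp2 K (N ^ (La + Lb)) *
       (cost_bound K La + cost_bound K Lb)) <= cost_bound K.+1 (La + Lb).
Proof.
move=> La_gt0 Lb_gt0; have L_gt0 : 0 < La + Lb by rewrite addn_gt0 La_gt0.
apply: leq_trans (leq_trans (cost_step K L_gt0) (exp2_ge 1 _)).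
have := cost_bound_le_cube K La Lb_gt0; have := cost_bound_le_cube K Lb La_gt0.
rewrite addnC; move: (exp2 K (N ^ (La + Lb))) => X; move: (exp2 K _) => Q; nia.
Qed.
End Bounds.

Section Semantics.
Variables (S : finType) (C : Type) (cargs : C -> seq (ty S)) (cres : C -> S).
Variables (Bt : finType) (bval : Bt -> dexp C).
Local Notation sem := (sem cargs cres bval).

Lemma eqcE t (e u : sem t) : (eqc e u).1 = (e == u).
Proof.
elim: t e u => [s|a IHa b IHb|a IHa b IHb] e u /=; first by rewrite val_eqE.
  by rewrite IHa IHb.
have pairE (x y : sem a * sem b) : (andc (eqc x.1 y.1) (eqc x.2 y.2)).1 = (x == y).
  by rewrite /= IHa IHb.
by rewrite /= !nested_foldr_subset // eqEsubset.
Qed.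

Lemma geqcP t (e u : sem t) : reflect (sqge e u) (geqc e u).1.
Proof.
elim: t e u => [s|a IHa b IHb|a IHa b IHb] e u /=; first exact: eqP.
  exact: andPP.
rewrite foldr_andcE /=; apply: (iffP allP) => [geA p pu | geA p].
  have := geA p; rewrite mem_enum pu foldr_orcE => /(_ isT) /hasP [q].
  rewrite mem_enum /= eqcE => qe /andP [/eqP q1p1 /IHb q2p2].
  by exists q.2; rewrite // -q1p1 -surjective_pairing.
rewrite mem_enum => /geA [v vp pe]; rewrite foldr_orcE; apply/hasP.
by exists (p.1, v); rewrite ?mem_enum //= eqcE eqxx; apply/IHb.
Qed.

Section Cost.
Variable N : nat.
Hypotheses (N_gt1 : 1 < N) (card_Bt_lt : #|Bt| < N).

Lemma card_sem_lt t K : depth t <= K -> #|sem t| < exp2 K (N ^ nsorts t).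
Proof.
elim: t K => [s|a IHa b IHb|a IHa b IHb] K /=.
- move=> _; rewrite expn1; apply: leq_trans (exp2_ge K N).
  exact: leq_ltn_trans (leq_card _ val_inj) card_Bt_lt.
- rewrite geq_max => /andP [ha hb]; rewrite card_prod.
  exact: ltn_mul_exp2 (nsorts_gt0 a) (nsorts_gt0 b) (IHa K ha) (IHb K hb).
- case: K => // K; rewrite ltnS geq_max => /andP [ha hb].
  rewrite card_set card_prod ltn_exp2l //.
  exact: ltn_mul_exp2 (nsorts_gt0 a) (nsorts_gt0 b) (IHa K ha) (IHb K hb).
Qed.

Lemma size_enum_sem_le a b K (A : {set sem a * sem b}) :
  depth a <= K -> depth b <= K -> size (enum A) <= exp2 K (N ^ (nsorts a + nsorts b)).
Proof.
move=> ha hb; rewrite -cardE; apply: leq_trans (max_card _) (ltnW _).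
by apply: (@card_sem_lt (TProd a b)); rewrite /= geq_max ha.
Qed.

Lemma eqc_cost t K (e u : sem t) : depth t <= K -> (eqc e u).2 <= cost_bound N K (nsorts t).
Proof.
elim: t K e u => [s|a IHa b IHb|a IHa b IHb] K e u /=.
- by rewrite cost_bound_gt0.
- rewrite geq_max => /andP [ha hb].
  apply: leq_trans (cost_bound_add N_gt1 K (nsorts_gt0 a) (nsorts_gt0 b)).
  exact: leq_add (IHa K _ _ ha) (IHb K _ _ hb).
case: K => // K; rewrite ltnS geq_max => /andP [ha hb].
have pair_cost (x y : sem a * sem b) : (andc (eqc x.1 y.1) (eqc x.2 y.2)).2 <=
    cost_bound N K (nsorts a) + cost_bound N K (nsorts b).
  exact: leq_add (IHa K _ _ ha) (IHb K _ _ hb).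
apply: leq_trans (cost_bound_arr N_gt1 K (nsorts_gt0 a) (nsorts_gt0 b)).
rewrite mul2n -addnn.
by apply: leq_add; apply: leq_trans (nested_foldr_cost_le _ _ pair_cost) _;
  rewrite !leq_mul ?size_enum_sem_le.
Qed.

Lemma geqc_cost t K (e u : sem t) : depth t <= K -> (geqc e u).2 <= cost_bound N K (nsorts t).
Proof.
elim: t K e u => [s|a IHa b IHb|a IHa b IHb] K e u /=.
- by rewrite cost_bound_gt0.
- rewrite geq_max => /andP [ha hb].
  apply: leq_trans (cost_bound_add N_gt1 K (nsorts_gt0 a) (nsorts_gt0 b)).
  exact: leq_add (IHa K _ _ ha) (IHb K _ _ hb).
case: K => // K; rewrite ltnS geq_max => /andP [ha hb].
have pair_cost (p q : sem a * sem b) : (andc (eqc q.1 p.1) (geqc q.2 p.2)).2 <=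
    cost_bound N K (nsorts a) + cost_bound N K (nsorts b).
  exact: leq_add (eqc_cost _ _ ha) (IHb K _ _ hb).
apply: leq_trans (cost_bound_arr N_gt1 K (nsorts_gt0 a) (nsorts_gt0 b)).
apply: leq_trans (nested_foldr_cost_le _ _ pair_cost) _.
by rewrite mul2n -addnn; apply: leq_trans (leq_addr _ _); rewrite !leq_mul ?size_enum_sem_le.
Qed.

End Cost.
End Semantics.

Theorem lemma12 (S : finType) (C : Type)
  (cargs : C -> seq (ty S)) (cres : C -> S)
  (Hord : forall c, all (fun k => depth k == 0) (cargs c))
  (Bt : finType) (bval : Bt -> dexp C)
  (Hinj : injective bval)
  (Hwt : forall b, exists t, wt cargs cres (bval b) t)
  (Hsub : forall (b : Bt) (d : dexp C), isub d (bval b) -> exists b', bval b' = d)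
  (N : nat) (HN : 1 <= #|Bt| < N)
  (K L : nat) (t : ty S) (Hdepth : depth t <= K) (HL : nsorts t = L) :
  #|sem cargs cres bval t| < exp2 K (N ^ L) /\
  (forall e u : sem cargs cres bval t,
     ((geqc e u).1 <-> sqge e u) /\
     (geqc e u).2 <= exp2 K (N ^ ((L + 1) ^ 3))).
Proof.
case/andP: HN => Bt_gt0 card_Bt_lt; have N_gt1 := leq_ltn_trans Bt_gt0 card_Bt_lt.
subst L; split; first exact: card_sem_lt.
move=> e u; split; first by split=> /geqcP.
exact: geqc_cost.
Qed.
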